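(* Let $\mathbb X$ be a Euclidean space, $g\colon\mathbb X\to\mathbb R^m$ twice continuously differentiable, $D\subset\mathbb R^m$ closed and locally polyhedral around $g(\bar x)$, $\Phi(x):=g(x)-D$, $(\bar x,0)\in\operatorname{gph}\Phi$, $u\in\mathbb S_{\mathbb X}$. Assume SOSCMS$(u)$: for all $y^*$, [$\nabla g(\bar x)^*y^*=0$, $\nabla^2\langle y^*,g\rangle(\bar x)[u,u]\ge0$, $y^*\in\mathcal N_D(g(\bar x);\nabla g(\bar x)u)$] implies $y^*=0$. Then: (a) for each $s\in\mathbb X$ and all $y^*,z^*$, [$\nabla g(\bar x)^*y^*=0$, $\nabla^2\langle y^*,g\rangle(\bar x)(u)+\nabla g(\bar x)^*z^*=0$, $y^*\in\mathcal N_{\mathbf T(u)}(w_s(u,0))$, and $z^*\in\mathcal N_{\mathbf T(u)}(w_s(u,0))$ or $z^*\in\mathcal T_{\mathcal N_{\mathbf T(u)}(w_s(u,0))}(y^* )$] implies $y^*=0$; and (b) for each $x^*,s\in\mathbb X$, $y^*,z^*\in\mathbb R^m$ and $\alpha\ge0$ with $v:=\alpha y^*$ satisfying $x^*=\nabla^2\langle y^*,g\rangle(\bar x)(u)+\nabla g(\bar x)^*z^*$, $y^*\in\mathcal N_{\mathbf T(u)}(w_s(u,v))\cap\ker\nabla g(\bar x)^*$, and $z^*\in\mathcal N_{\mathbf T(u)}(w_s(u,v))$ or $z^*\in\mathcal T_{\mathcal N_{\mathbf T(u)}(w_s(u,v))}(y^* )$, there is $\lambda\in\mathcal N_D(g(\bar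 x))$ with $x^*=\nabla g(\bar x)^*\lambda$.
   Context: $\mathbf T(u):=\mathcal T_{\mathcal T_D(g(\bar x))}(\nabla g(\bar x)u)$, $w_s(u,v):=\nabla g(\bar x)s+\tfrac12\nabla^2g(\bar x)[u,u]-v$, with $\nabla^2g(\bar x)[u,u]=(\langle u,\nabla^2g_i(\bar x)u\rangle)_{i=1}^m$; $\nabla^2\langle y^*,g\rangle(\bar x)(u)$ is the Hessian of $x\mapsto\langle y^*,g(x)\rangle$ applied to $u$ and $\nabla^2\langle y^*,g\rangle(\bar x)[u,u]$ the associated quadratic form. $\mathcal T$, $\mathcal N$ tangent and limiting normal cones; $\mathcal N_D(y;w)$ directional limiting normal cone (all $\eta$ with $w_k\to w$, $t_k\downarrow0$, $\eta_k\to\eta$, $\eta_k\in\widehat{\mathcal N}_D(y+t_kw_k)$). Locally polyhedral: intersection with a box around $g(\bar x)$ is a finite union of convex polyhedra. *)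

From mathcomp Require Import all_boot all_order all_algebra.
From mathcomp Require Import reals.
Set Implicit Arguments. Unset Strict Implicit. Unset Printing Implicit Defensive.
Import Order.TTheory GRing.Theory Num.Theory.
Local Open Scope ring_scope.

Section Defs.
Variable R : realType.

Definition vec (n : nat) := 'cV[R]_n.
Definition vset (n : nat) := vec n -> Prop.

Definition dot n (u v : vec n) : R := \sum_(i < n) u i 0 * v i 0.
Definition enorm n (u : vec n) : R := Num.sqrt (dot u u).

Definition vcvg n (x : nat -> vec n) (a : vec n) : Prop :=
  forall eps : R, 0 < eps -> exists N : nat, forall k, (N <= k)%N -> enorm (x k - a) < eps.
Definition tdown0 (t : nat -> R) : Prop :=
  (forall k, 0 < t k) /\
  (forall eps : R, 0 < eps -> exists N : nat, forall k, (N <= k)%N -> t k < eps).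

Definition closed_set n (C : vset n) : Prop :=
  forall (y : nat -> vec n) (a : vec n), (forall k, C (y k)) -> vcvg y a -> C a.

Definition tangent_cone n (C : vset n) (y : vec n) : vset n := fun w =>
  C y /\ exists (t : nat -> R) (wk : nat -> vec n),
    tdown0 t /\ vcvg wk w /\ forall k, C (y + t k *: wk k).

Definition regular_normal_cone n (C : vset n) (y : vec n) : vset n := fun eta =>
  C y /\ forall eps : R, 0 < eps -> exists delta : R, 0 < delta /\
    forall y' : vec n, C y' -> enorm (y' - y) < delta ->
      dot eta (y' - y) <= eps * enorm (y' - y).

Definition normal_cone n (C : vset n) (y : vec n) : vset n := fun eta =>
  C y /\ exists (yk etak : nat -> vec n),
    vcvg yk y /\ vcvg etak eta /\
    forall k, C (yk k) /\ regular_normal_cone C (yk k) (etak k).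

Definition dir_normal_cone n (C : vset n) (y w : vec n) : vset n := fun eta =>
  exists (t : nat -> R) (wk etak : nat -> vec n),
    tdown0 t /\ vcvg wk w /\ vcvg etak eta /\
    forall k, regular_normal_cone C (y + t k *: wk k) (etak k).

Definition convex_polyhedron n (P : vset n) : Prop :=
  exists (k : nat) (A : 'M[R]_(k, n)) (b : vec k),
    forall y, P y <-> forall i, (A *m y) i 0 <= b i 0.

Definition locally_polyhedral n (D : vset n) (y0 : vec n) : Prop :=
  exists r : R, 0 < r /\ exists (k : nat) (P : 'I_k -> vset n),
    (forall j, convex_polyhedron (P j)) /\
    forall y, (D y /\ forall i, `|y i 0 - y0 i 0| <= r) <-> exists j, P j y.

Definition frechet_deriv n m (f : vec n -> vec m) (x : vec n) (A : 'M[R]_(m, n)) :=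
  forall eps : R, 0 < eps -> exists delta : R, 0 < delta /\
    forall h : vec n, enorm h < delta ->
      enorm (f (x + h) - f x - A *m h) <= eps * enorm h.

Definition continuous_mx n p q (F : vec n -> 'M[R]_(p, q)) :=
  forall (x : vec n) (i : 'I_p) (j : 'I_q) (eps : R), 0 < eps ->
    exists delta : R, 0 < delta /\
      forall x', enorm (x' - x) < delta -> `|F x' i j - F x i j| < eps.

Definition C2_with n m (g : vec n -> vec m) (Dg : vec n -> 'M[R]_(m, n))
    (Hg : 'I_m -> vec n -> 'M[R]_n) : Prop :=
  (forall x, frechet_deriv g x (Dg x)) /\
  (forall i x, frechet_deriv (fun x' => (row i (Dg x'))^T) x (Hg i x)) /\
  (forall i, continuous_mx (Hg i)).

Definition hess_lag n m (Hg : 'I_m -> vec n -> 'M[R]_n) (x : vec n) (y : vec m) (u : vec n)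
  : vec n := \sum_(i < m) y i 0 *: (Hg i x *m u).
Definition hess_lag_quad n m (Hg : 'I_m -> vec n -> 'M[R]_n) (x : vec n) (y : vec m) (u : vec n)
  : R := dot u (hess_lag Hg x y u).
Definition hess_quad n m (Hg : 'I_m -> vec n -> 'M[R]_n) (x u : vec n) : vec m :=
  \col_(i < m) dot u (Hg i x *m u).

Definition Tcone n m (D : vset m) (g : vec n -> vec m) (Dg : vec n -> 'M[R]_(m, n))
  (xb u : vec n) : vset m :=
  tangent_cone (tangent_cone D (g xb)) (Dg xb *m u).

Definition wsv n m (Dg : vec n -> 'M[R]_(m, n)) (Hg : 'I_m -> vec n -> 'M[R]_n)
  (xb s u : vec n) (v : vec m) : vec m :=
  Dg xb *m s + 2^-1 *: hess_quad Hg xb u - v.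

End Defs.

From mathcomp Require Import all_boot all_order all_algebra.
From mathcomp Require Import reals lra.
From mathcomp Require boolp.
Import Order.TTheory GRing.Theory Num.Theory.
Set Implicit Arguments. Unset Strict Implicit. Unset Printing Implicit Defensive.
Local Open Scope ring_scope.

(* A normal [y] to the cone [T(u)] at [w_s(u, v)] is orthogonal to [w_s(u, v)];
   when [Dg(xb)^T y = 0] this reads [1/2 <y, Hg[u, u]> = <y, v>], which is
   nonnegative for [v = 0] and for [v = alpha y].  As [D] is locally polyhedral,
   near [g xb] it coincides with [g xb + T_D(g xb)], and near [Dg(xb) u] the cone
   [T_D(g xb)] coincides with [Dg(xb) u + T(u)]; hence normals to [T(u)] are
   directional limiting normals to [D] in direction [Dg(xb) u], and SOSCMS(u)
   forces [y = 0].  Then [x* = Dg(xb)^T z], and [z] is a limiting normal to [D]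
   in both alternatives, since [N_D(g xb)] is a closed cone containing the
   normal cones to [T(u)]. *)

Section Euclidean.
Variables (R : realType) (n : nat).
Implicit Types (a b c : vec R n) (t : R).

Lemma dotC a b : dot a b = dot b a.
Proof. by apply: eq_bigr => i _; rewrite mulrC. Qed.

Lemma dotDr a b c : dot a (b + c) = dot a b + dot a c.
Proof. by rewrite /dot -big_split; apply: eq_bigr => i _; rewrite mxE mulrDr. Qed.

Lemma dotZr a b t : dot a (t *: b) = t * dot a b.
Proof. by rewrite /dot mulr_sumr; apply: eq_bigr => i _; rewrite mxE mulrCA. Qed.

Lemma dotNr a b : dot a (- b) = - dot a b.
Proof. by rewrite -scaleN1r dotZr mulN1r. Qed.

Lemma dotBr a b c : dot a (b - c) = dot a b - dot a c.
Proof. by rewrite dotDr dotNr. Qed.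

Lemma dotDl a b c : dot (b + c) a = dot b a + dot c a.
Proof. by rewrite dotC dotDr !(dotC a). Qed.

Lemma dotZl a b t : dot (t *: b) a = t * dot b a.
Proof. by rewrite dotC dotZr dotC. Qed.

Lemma dotBl a b c : dot (b - c) a = dot b a - dot c a.
Proof. by rewrite dotC dotBr !(dotC a). Qed.

Lemma dot0r a : dot a 0 = 0.
Proof. by rewrite /dot big1 // => i _; rewrite mxE mulr0. Qed.

Lemma dot0l a : dot 0 a = 0.
Proof. by rewrite dotC dot0r. Qed.

Lemma dot_ge0 a : 0 <= dot a a.
Proof. by apply: sumr_ge0 => i _; rewrite -expr2 sqr_ge0. Qed.

Lemma dot_eq0 a : dot a a = 0 -> a = 0.
Proof.
move=> a0; apply/matrixP => i j; rewrite (ord1 j) mxE.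
have sq0 : \sum_(k < n) a k 0 ^+ 2 = 0.
  by rewrite -[RHS]a0; apply: eq_bigr => k _; rewrite expr2.
have := psumr_eq0P (P := predT) (fun k _ => sqr_ge0 (a k 0)).
by move=> /(_ sq0 i isT) /eqP; rewrite sqrf_eq0 => /eqP.
Qed.

Lemma enorm_ge0 a : 0 <= enorm a.
Proof. exact: sqrtr_ge0. Qed.

Lemma enorm_sq a : enorm a ^+ 2 = dot a a.
Proof. by rewrite /enorm sqr_sqrtr // dot_ge0. Qed.

Lemma enormZ a t : enorm (t *: a) = `|t| * enorm a.
Proof. by rewrite /enorm dotZl dotZr mulrA -expr2 sqrtrM ?sqr_ge0 // sqrtr_sqr. Qed.

Lemma enormN a : enorm (- a) = enorm a.
Proof. by rewrite -scaleN1r enormZ normrN normr1 mul1r. Qed.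

Lemma enorm_distC a b : enorm (a - b) = enorm (b - a).
Proof. by rewrite -enormN opprB. Qed.

Lemma enorm0 : enorm (0 : vec R n) = 0.
Proof. by rewrite /enorm dot0r sqrtr0. Qed.

Lemma enorm_eq0 a : enorm a = 0 -> a = 0.
Proof. by move=> a0; apply: dot_eq0; rewrite -enorm_sq a0 expr2 mulr0. Qed.

Lemma cauchy_schwarz a b : dot a b <= enorm a * enorm b.
Proof.
have [/enorm_eq0 ->|na] := eqVneq (enorm a) 0; first by rewrite dot0l enorm0 mul0r.
have [/enorm_eq0 ->|nb] := eqVneq (enorm b) 0; first by rewrite dot0r enorm0 mulr0.
have a0 : 0 < enorm a by rewrite lt0r na enorm_ge0.
have b0 : 0 < enorm b by rewrite lt0r nb enorm_ge0.
have := dot_ge0 (enorm b *: a - enorm a *: b).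
rewrite dotBl !dotBr !dotZl !dotZr -!enorm_sq (dotC b a) => sq_ge0.
by rewrite -(ler_pM2l (mulr_gt0 a0 b0)); nra.
Qed.

Lemma cauchy_schwarz_abs a b : `|dot a b| <= enorm a * enorm b.
Proof.
rewrite ler_norml cauchy_schwarz andbT lerNl -dotNr.
by rewrite (le_trans (cauchy_schwarz _ _)) // enormN.
Qed.

Lemma ler_enormD a b : enorm (a + b) <= enorm a + enorm b.
Proof.
rewrite -(ler_pXn2r (n:=2)) // ?nnegrE ?addr_ge0 ?enorm_ge0 //.
rewrite enorm_sq dotDl !dotDr (dotC b a) -!enorm_sq.
have := cauchy_schwarz a b; nra.
Qed.

Lemma enorm_le_dist a b : enorm a <= enorm b + enorm (a - b).
Proof. by rewrite -{1}(subrK b a) addrC ler_enormD. Qed.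

Lemma coord_le_enorm a i : `|a i 0| <= enorm a.
Proof.
rewrite -(ler_pXn2r (n:=2)) // ?nnegrE ?enorm_ge0 //.
rewrite enorm_sq real_normK ?num_real // /dot (bigD1 i) //= -expr2 lerDl.
by apply: sumr_ge0 => k _; rewrite -expr2 sqr_ge0.
Qed.

End Euclidean.

Section Estimates.
Variables (R : realType) (n : nat).

Lemma harmonic_lt (c eps : R) : 0 < eps ->
  exists N : nat, forall k, (N <= k)%N -> c * (k.+1%:R)^-1 < eps.
Proof.
move=> eps0; have c1 : 0 < `|c| + 1 by rewrite ltr_wpDl.
have e0 : 0 < (eps / (`|c| + 1))^-1 by rewrite invr_gt0 divr_gt0.
exists (Num.Def.archi_bound (eps / (`|c| + 1))^-1) => k kN.
have ltk : (eps / (`|c| + 1))^-1 < k.+1%:R.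
  by apply: lt_le_trans (archi_boundP (ltW e0)) _; rewrite ler_nat (leq_trans kN).
have ik : 0 < (k.+1%:R : R)^-1 by rewrite invr_gt0 ltr0Sn.
have {}ltk : (k.+1%:R : R)^-1 < eps / (`|c| + 1).
  by rewrite -[X in _ < X]invrK ltf_pV2 ?posrE ?ltr0Sn.
rewrite ltr_pdivlMr // in ltk.
by apply: le_lt_trans ltk; rewrite mulrC ler_wpM2l ?(ltW ik) // (le_trans (ler_norm c)) ?lerDl.
Qed.

Lemma vcvg_le_harmonic (x : nat -> vec R n) a (c : R) :
  (forall k, enorm (x k - a) <= c * (k.+1%:R)^-1) -> vcvg x a.
Proof.
move=> xa eps e0; have [N HN] := harmonic_lt c e0.
by exists N => k kN; apply: le_lt_trans (xa k) (HN k kN).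
Qed.

Lemma tdown0_harmonic (t : nat -> R) (c : R) :
  (forall k, 0 < t k /\ t k <= c * (k.+1%:R)^-1) -> tdown0 t.
Proof.
move=> tc; split=> [k|eps e0]; first by case: (tc k).
have [N HN] := harmonic_lt c e0.
by exists N => k kN; apply: le_lt_trans (tc k).2 (HN k kN).
Qed.

Lemma vcvg_scale0 (t : nat -> R) (w : nat -> vec R n) a :
  tdown0 t -> vcvg w a -> vcvg (fun k => t k *: w k) 0.
Proof.
move=> [t0 tc] wa eps e0.
have a1 : 0 < enorm a + 1 by rewrite ltr_wpDl ?enorm_ge0.
have [N1 HN1] := wa 1 ltr01.
have [N2 HN2] := tc (eps / (enorm a + 1)) (divr_gt0 e0 a1).
exists (maxn N1 N2) => k; rewrite geq_max => /andP[k1 k2].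
have wk : enorm (w k) <= enorm a + 1.
  by apply: le_trans (enorm_le_dist (w k) a) _; rewrite lerD2l ltW ?HN1.
have tk := HN2 k k2; rewrite ltr_pdivlMr // in tk.
rewrite subr0 enormZ gtr0_norm //.
by apply: le_lt_trans tk; rewrite ler_wpM2l ?(ltW (t0 k)).
Qed.

Lemma abs_le_eps_eq0 (d e : R) : 0 <= e ->
  (forall eps, 0 < eps -> `|d| <= eps * e) -> d = 0.
Proof.
move=> e0 small; apply/eqP; apply/negPn/negP => d0; rewrite -normr_gt0 in d0.
have e1 : 0 < e + 1 by rewrite ltr_wpDl.
have := small (`|d| / (e + 1)) (divr_gt0 d0 e1).
by rewrite mulrAC ler_pdivlMr //; nra.
Qed.

Lemma common_radius (I : finType) (P : I -> R -> Prop) :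
  (forall i d d', 0 < d' -> d' <= d -> P i d -> P i d') ->
  (forall i, exists2 d, 0 < d & P i d) -> exists2 d, 0 < d & forall i, P i d.
Proof.
move=> Pdown Pex.
suff [d d0 Pd] : exists2 d, 0 < d & forall i, i \in enum I -> P i d.
  by exists d => // i; apply: Pd; rewrite mem_enum.
elim: (enum I) => [|j s [d1 d10 IH]]; first by exists 1.
have [d2 d20 Pd2] := Pex j.
have d0 : 0 < Num.min d1 d2 by rewrite lt_min d10.
exists (Num.min d1 d2) => // i; rewrite inE => /orP[/eqP ->|iS].
  by apply: Pdown d0 _ Pd2; rewrite ge_min lexx orbT.
by apply: Pdown d0 _ (IH _ iS); rewrite ge_min lexx.
Qed.

End Estimates.

Section Cones.
Variables (R : realType) (n : nat).
Implicit Types (C K S : vset R n) (x y w eta : vec R n).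

Definition cone C := forall x (t : R), 0 < t -> C x -> C (t *: x).

Lemma tangent_cone_cone C y : cone (tangent_cone C y).
Proof.
move=> w l l0 [Cy [t [wk [[t0 tc] [cw Ck]]]]]; split => //.
exists (fun k => t k / l), (fun k => l *: wk k); split; [split|split].
- by move=> k; rewrite divr_gt0.
- move=> eps e0; have [N HN] := tc (eps * l) (mulr_gt0 e0 l0).
  by exists N => k kN; rewrite ltr_pdivrMr // HN.
- move=> eps e0; have [N HN] := cw (eps / l) (divr_gt0 e0 l0).
  exists N => k kN; rewrite -scalerBr enormZ gtr0_norm //.
  by rewrite mulrC -ltr_pdivlMr // HN.
- by move=> k; rewrite scalerA divfK ?gt_eqF.
Qed.

Lemma tangent_cone_sub S S' y : (forall x, S x -> S' x) ->
  forall w, tangent_cone S y w -> tangent_cone S' y w.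
Proof.
move=> SS' w [Sy [t [wk [tt [cw Sk]]]]]; split; first exact: SS'.
by exists t, wk; split; [|split=> // k; apply: SS'].
Qed.

Lemma tangent_cone0_sub S : cone S -> closed_set S ->
  forall w, tangent_cone S 0 w -> S w.
Proof.
move=> Scone Sclosed w [_ [t [wk [[t0 _] [cw Sk]]]]].
apply: Sclosed cw => k; have tk : 0 < (t k)^-1 by rewrite invr_gt0.
by have := Scone _ _ tk (Sk k); rewrite add0r scalerA mulVf ?gt_eqF // scale1r.
Qed.

Lemma regular_normal_cone_local C K x y rho eta : 0 < rho -> C y ->
  (forall h, enorm h < rho -> C (y + h) -> K (x + h)) ->
  regular_normal_cone K x eta -> regular_normal_cone C y eta.
Proof.
move=> rho0 Cy CK [_ Kx]; split => // eps e0.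
have [d [d0 Kd]] := Kx eps e0.
have dr : 0 < Num.min d rho by rewrite lt_min d0.
exists (Num.min d rho); split => // y' Cy'; rewrite lt_min => /andP[yd yr].
have := Kd (x + (y' - y)); rewrite addrAC subrr add0r; apply => //.
by apply: CK; rewrite // addrC subrK.
Qed.

Lemma regular_normal_cone_dilate K x (l : R) eta : cone K -> 0 < l ->
  regular_normal_cone K x eta -> regular_normal_cone K (l *: x) eta.
Proof.
move=> Kcone l0 [Kx Kd]; split; first exact: Kcone.
move=> eps e0; have [d [d0 Hd]] := Kd eps e0.
exists (l * d); split; first exact: mulr_gt0.
move=> y' Ky' yd.
have li : 0 < l^-1 by rewrite invr_gt0.
have ly : y' - l *: x = l *: (l^-1 *: y' - x).
  by rewrite scalerBr scalerA mulfV ?gt_eqF // scale1r.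
rewrite ly enormZ gtr0_norm // ltr_pM2l // in yd.
have := Hd _ (Kcone _ _ li Ky') yd.
by rewrite ly dotZr enormZ gtr0_norm // mulrCA ler_pM2l.
Qed.

(* Moving from [x] to [(1 +- t) x] inside the cone bounds [<eta, x>] on both sides. *)
Lemma regular_normal_cone_orth K x eta : cone K ->
  regular_normal_cone K x eta -> dot eta x = 0.
Proof.
move=> Kcone [Kx Kd]; apply: (abs_le_eps_eq0 (enorm_ge0 x)) => eps e0.
have [d [d0 Hd]] := Kd eps e0.
set e := enorm x; have e_ge0 : 0 <= e := enorm_ge0 x.
have e1 : 0 < 2 * (e + 1) by nra.
set t := Num.min (1/2) (d / (2 * (e + 1))).
have t0 : 0 < t by rewrite lt_min !divr_gt0.
have t1 : t <= 1/2 by rewrite ge_min lexx.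
have t2 : t * (2 * (e + 1)) <= d by rewrite -ler_pdivlMr // ge_min lexx orbT.
have step s : `|s| = t -> dot eta (s *: x) <= eps * (t * e).
  move=> st; have s1 : 0 < 1 + s by move: st; case: (ger0P s) => _; lra.
  have := Hd _ (Kcone _ _ s1 Kx).
  by rewrite scalerDl scale1r addrAC subrr add0r enormZ st -/e; apply; nra.
have up := step t (gtr0_norm t0).
have lo := step (- t) ltac:(by rewrite normrN gtr0_norm).
rewrite dotZr in up; rewrite dotZr in lo.
by rewrite ler_norml; apply/andP; split; nra.
Qed.

Lemma regular_normal_cone_scale C y eta (l : R) : 0 < l ->
  regular_normal_cone C y eta -> regular_normal_cone C y (l *: eta).
Proof.
move=> l0 [Cy Cd]; split => // eps e0.
have [d [d0 Hd]] := Cd (eps / l) (divr_gt0 e0 l0).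
exists d; split => // y' Cy' yd.
rewrite dotZl -ler_pdivlMl // mulrA (mulrC _ eps); exact: Hd.
Qed.

Lemma normal_cone_cone C y : cone (normal_cone C y).
Proof.
move=> eta l l0 [Cy [yk [etak [cy [ce Ck]]]]]; split => //.
exists yk, (fun k => l *: etak k); split => //; split.
- move=> eps e0; have [N HN] := ce (eps / l) (divr_gt0 e0 l0).
  exists N => k kN; rewrite -scalerBr enormZ gtr0_norm //.
  by rewrite mulrC -ltr_pdivlMr // HN.
- by move=> k; split; [exact: (Ck k).1 | apply: regular_normal_cone_scale (Ck k).2].
Qed.

(* A diagonal argument: pick, for each [k], a point of the k-th defining sequence
   within [1/(k+1)] of both limits. *)
Lemma normal_cone_closed C y : closed_set (normal_cone C y).
Proof.
move=> z a Nz za; have Cy : C y by case: (Nz 0%N).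
have near k : exists p : vec R n * vec R n,
    [/\ regular_normal_cone C p.1 p.2, enorm (p.1 - y) <= 1 * (k.+1%:R)^-1
      & enorm (p.2 - z k) < (k.+1%:R)^-1].
  have [_ [yk [etak [cy [ce Ck]]]]] := Nz k.
  have ek : 0 < (k.+1%:R : R)^-1 by rewrite invr_gt0 ltr0Sn.
  have [N1 HN1] := cy _ ek; have [N2 HN2] := ce _ ek.
  exists (yk (maxn N1 N2), etak (maxn N1 N2)); split; first exact: (Ck _).2.
    by rewrite mul1r ltW // HN1 // leq_maxl.
  by rewrite HN2 // leq_maxr.
have [p Hp] := boolp.choice near.
split => //; exists (fun k => (p k).1), (fun k => (p k).2); split; [|split].
- by apply: (vcvg_le_harmonic (c := 1)) => k; have [_ ? _] := Hp k.
- move=> eps e0; have e2 : 0 < eps / 2 by rewrite divr_gt0.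
  have [N1 HN1] := za _ e2; have [N2 HN2] := harmonic_lt 1 e2.
  exists (maxn N1 N2) => k; rewrite geq_max => /andP[k1 k2].
  have [_ _ pz] := Hp k; have := HN1 k k1; have := HN2 k k2; rewrite mul1r.
  have := ler_enormD ((p k).2 - z k) (z k - a); rewrite addrA subrK.
  by rewrite {3}(splitr eps); move: pz; move: (k.+1%:R^-1 : R) => r; lra.
- by move=> k; have [rn _ _] := Hp k; split; [case: rn|].
Qed.

Lemma dot_lim0 (a b : nat -> vec R n) x y :
  vcvg a x -> vcvg b y -> (forall k, dot (a k) (b k) = 0) -> dot x y = 0.
Proof.
move=> ax bx ab0; apply: (abs_le_eps_eq0 (@ler01 R)) => eps e0; rewrite mulr1.
have X0 := enorm_ge0 x; have Y0 := enorm_ge0 y.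
set e1 := Num.min 1 (eps / (enorm x + enorm y + 2)).
have e10 : 0 < e1 by rewrite lt_min ltr01 divr_gt0 //; lra.
have e11 : e1 <= 1 by rewrite ge_min lexx.
have e12 : e1 * (enorm x + enorm y + 2) <= eps.
  by rewrite -ler_pdivlMr ?ge_min ?lexx ?orbT //; lra.
have [N1 HN1] := ax e1 e10; have [N2 HN2] := bx e1 e10.
pose k := maxn N1 N2.
have a1 := HN1 k (leq_maxl _ _); have b1 := HN2 k (leq_maxr _ _).
have -> : dot x y = dot (x - a k) y + dot (a k) (y - b k).
  by rewrite dotBl dotBr ab0 subr0 subrK.
have c1 := cauchy_schwarz_abs (x - a k) y.
have c2 := cauchy_schwarz_abs (a k) (y - b k).
rewrite enorm_distC in c1; rewrite enorm_distC in c2.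
have n1 := enorm_le_dist (a k) x.
have := enorm_ge0 (a k - x); have := enorm_ge0 (b k - y); have := enorm_ge0 (a k).
move=> *; apply: (le_trans (ler_normD _ _)); nra.
Qed.

Lemma normal_cone_orth K x eta : cone K -> normal_cone K x eta -> dot eta x = 0.
Proof.
move=> Kcone [_ [yk [etak [cy [ce Kk]]]]].
by apply: dot_lim0 ce cy _ => k; apply: regular_normal_cone_orth Kcone (Kk k).2.
Qed.

Lemma dir_normal_cone_sub C y w eta : C y ->
  dir_normal_cone C y w eta -> normal_cone C y eta.
Proof.
move=> Cy [t [wk [etak [tt [cw [ce Ck]]]]]]; split => //.
exists (fun k => y + t k *: wk k), etak; split; last by split => // k; case: (Ck k).
move=> eps e0; have [N HN] := vcvg_scale0 tt cw e0.
by exists N => k kN; rewrite addrAC subrr add0r -[t k *: _]subr0 HN.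
Qed.

End Cones.

Section Polyhedra.
Variables (R : realType) (n : nat).
Implicit Types (C K S : vset R n) (x y h : vec R n).

Lemma mx_row_bound k (A : 'M[R]_(k, n)) i h :
  `|(A *m h) i 0| <= (\sum_l `|A i l|) * enorm h.
Proof.
rewrite mxE mulr_suml; apply: (le_trans (ler_norm_sum _ _ _)).
by apply: ler_sum => l _; rewrite normrM ler_wpM2l ?coord_le_enorm.
Qed.

Lemma mx_rows_small k (A : 'M[R]_(k, n)) (c : 'I_k -> R) : (forall i, 0 < c i) ->
  exists2 d, 0 < d & forall i h, enorm h < d -> `|(A *m h) i 0| < c i.
Proof.
move=> c0; apply: common_radius => [i d d' _ d'd Hd h hd'|i].
  exact/Hd/lt_le_trans/d'd.
set M := \sum_l `|A i l|.
have M1 : 0 < M + 1 by rewrite ltr_wpDl ?sumr_ge0.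
exists (c i / (M + 1)) => [|h hd]; first by rewrite divr_gt0.
apply: le_lt_trans (mx_row_bound A i h) _.
rewrite ltr_pdivlMr // in hd; apply: le_lt_trans hd.
by rewrite mulrC ler_wpM2l ?enorm_ge0 ?lerDl.
Qed.

Lemma mx_rowD k (A : 'M[R]_(k, n)) x y i :
  (A *m (x + y)) i 0 = (A *m x) i 0 + (A *m y) i 0.
Proof. by rewrite mulmxDr mxE. Qed.

Definition compl_open S := forall a, ~ S a ->
  exists2 rho, 0 < rho & forall h, enorm (h - a) < rho -> ~ S h.

Lemma compl_open_union k (Q : 'I_k -> vset R n) :
  (forall j, compl_open (Q j)) -> compl_open (fun h => exists j, Q j h).
Proof.
move=> Qopen a nQa.
have [rho rho0 Hrho] : exists2 rho, 0 < rho &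
    forall j h, enorm (h - a) < rho -> ~ Q j h.
  apply: common_radius => [j r r' _ r'r Hr h hr'|j]; first exact/Hr/lt_le_trans/r'r.
  by apply: Qopen => Qa; apply: nQa; exists j.
by exists rho => // h ha [j]; apply: Hrho ha.
Qed.

Lemma compl_open_limit S (w : nat -> vec R n) a : compl_open S ->
  (exists N, forall k, (N <= k)%N -> S (w k)) -> vcvg w a -> S a.
Proof.
move=> Sopen [N Sw] wa; apply: boolp.contrapT => nSa.
have [rho rho0 Hrho] := Sopen a nSa; have [N' HN'] := wa rho rho0.
exact: Hrho (HN' _ (leq_maxr N N')) (Sw _ (leq_maxl N N')).
Qed.

Lemma convex_polyhedron_compl_open P : convex_polyhedron P -> compl_open P.
Proof.
move=> [k [A [b PE]]] a nPa.
have [i ai] : exists i, b i 0 < (A *m a) i 0.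
  case: (boolP [exists i, b i 0 < (A *m a) i 0]) => [/existsP //|/existsPn none].
  by case: nPa; apply/PE => i; rewrite leNgt none.
rewrite -subr_gt0 in ai; have [d d0 Hd] := mx_rows_small A (fun=> ai).
exists d => // h ha /PE /(_ i); rewrite -(subrK a h) mx_rowD.
by have := Hd i _ ha; rewrite real_ltr_norml ?num_real //; lra.
Qed.

Section ActiveCone.
Variables (k : nat) (A : 'M[R]_(k, n)) (b : vec R k) (y0 : vec R n).

Definition feasible y := forall i, (A *m y) i 0 <= b i 0.

Definition active_cone h :=
  feasible y0 /\ forall i, (A *m y0) i 0 = b i 0 -> (A *m h) i 0 <= 0.

Lemma active_cone_cone : cone active_cone.
Proof.
move=> h t t0 [Fy0 Ah]; split => // i /Ah Ahi.
by rewrite -scalemxAr mxE pmulr_rle0.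
Qed.

Lemma active_cone_polyhedron : convex_polyhedron active_cone.
Proof.
case: (boolp.pselect (feasible y0)) => Fy0; last first.
  exists 1%N, 0, (const_mx (-1)) => h; split=> [[]//|/(_ ord0)].
  by rewrite mul0mx !mxE; lra.
pose act i := (A *m y0) i 0 == b i 0.
exists k, (\matrix_(i, l) (if act i then A i l else 0)), 0 => h.
have rowE i : ((\matrix_(i, l) (if act i then A i l else 0)) *m h) i 0
    = if act i then (A *m h) i 0 else 0.
  rewrite mxE; under eq_bigr do rewrite mxE.
  by case: (act i); [rewrite mxE | rewrite big1 // => l _; rewrite mul0r].
split=> [[_ Ah] i|Mh].
  by rewrite rowE [X in _ <= X]mxE; case: ifP => [/eqP/Ah|].
by split=> // i ai; have := Mh i; rewrite rowE [X in _ <= X]mxE /act ai eqxx.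
Qed.

(* Inactive constraints have slack at [y0], which small moves cannot exhaust. *)
Lemma feasible_near_active_cone : exists2 d, 0 < d &
  forall h, enorm h < d -> (feasible (y0 + h) <-> active_cone h).
Proof.
pose slack i := b i 0 - (A *m y0) i 0.
pose c i := if slack i == 0 then 1 else `|slack i|.
have c0 i : 0 < c i by rewrite /c; case: eqP => // /eqP; rewrite normr_gt0.
have [d d0 Hd] := mx_rows_small A c0.
exists d => // h hd.
have inactive i : (A *m y0) i 0 != b i 0 -> `|(A *m h) i 0| < `|slack i|.
  by move=> ai; have := Hd i h hd; rewrite /c subr_eq0 eq_sym (negbTE ai).
split=> [Fyh|[Fy0 Ah] i].
  have Fy0 : feasible y0.
    move=> i; have := Fyh i; rewrite mx_rowD.
    have [ai|ai] := eqVneq ((A *m y0) i 0) (b i 0); first by rewrite ai.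
    have [//|lt_b] := leP ((A *m y0) i 0) (b i 0).
    have := inactive i ai; rewrite [`|slack i|]ltr0_norm ?subr_lt0 //.
    by rewrite real_ltr_norml ?num_real // /slack => /andP[+ _]; lra.
  split=> // i ai; have := Fyh i; rewrite mx_rowD ai; lra.
rewrite mx_rowD; have [ai|ai] := eqVneq ((A *m y0) i 0) (b i 0).
  by have := Ah i ai; lra.
have lt_b : (A *m y0) i 0 < b i 0 by rewrite lt_neqAle ai Fy0.
have := inactive i ai; rewrite [`|slack i|]gtr0_norm ?subr_gt0 //.
by rewrite real_ltr_norml ?num_real // /slack => /andP[_ ?]; lra.
Qed.

End ActiveCone.

Lemma polyhedron_near_cone P y0 : convex_polyhedron P ->
  exists Q : vset R n, [/\ convex_polyhedron Q, cone Q &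
    exists2 d, 0 < d & forall h, enorm h < d -> (P (y0 + h) <-> Q h)].
Proof.
move=> [k [A [b PE]]]; exists (active_cone A b y0).
split; [exact: active_cone_polyhedron | exact: active_cone_cone |].
have [d d0 Hd] := feasible_near_active_cone A b y0.
by exists d => // h /Hd <-; apply: PE.
Qed.

Definition polyhedral_near C y0 := exists2 r, 0 < r &
  exists k (P : 'I_k -> vset R n), (forall j, convex_polyhedron (P j)) /\
    forall h, enorm h < r -> (C (y0 + h) <-> exists j, P j (y0 + h)).

Lemma locally_polyhedral_near C y0 : locally_polyhedral C y0 -> polyhedral_near C y0.
Proof.
move=> [r [r0 [k [P [Ppoly CP]]]]]; exists r => //; exists k, P; split => // h hr.
have box i : `|(y0 + h) i 0 - y0 i 0| <= r.
  by rewrite mxE addrC addKr (le_trans (coord_le_enorm h i)) ?ltW.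
by rewrite -CP; split=> [|[]].
Qed.

Lemma polyhedral_near_cones C y0 : polyhedral_near C y0 ->
  exists k (Q : 'I_k -> vset R n), (forall j, convex_polyhedron (Q j) /\ cone (Q j)) /\
    exists2 d, 0 < d & forall h, enorm h < d -> (C (y0 + h) <-> exists j, Q j h).
Proof.
move=> [r r0 [k [P [Ppoly CP]]]].
have [Q HQ] := boolp.choice (fun j => polyhedron_near_cone y0 (Ppoly j)).
exists k, Q; split=> [j|]; first by have [] := HQ j.
have [d d0 Hd] : exists2 d, 0 < d &
    forall j h, enorm h < d -> (P j (y0 + h) <-> Q j h).
  apply: common_radius => [j d d' _ d'd Hd h hd'|j]; first exact/Hd/lt_le_trans/d'd.
  by have [_ _ [d' d'0 Hd']] := HQ j; exists d'.
have dr : 0 < Num.min d r by rewrite lt_min d0.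
exists (Num.min d r) => // h; rewrite lt_min => /andP[hd hr].
rewrite CP //; split=> -[j]; exists j; exact/(Hd j h hd).
Qed.

Lemma tangent_cone_near_cone C K y0 d : cone K -> compl_open K -> C y0 -> 0 < d ->
  (forall h, enorm h < d -> (C (y0 + h) <-> K h)) ->
  forall h, tangent_cone C y0 h <-> K h.
Proof.
move=> Kcone Kopen Cy0 d0 CK h; split.
  move=> [_ [t [wk [tt [cw Ck]]]]].
  have [N HN] := vcvg_scale0 tt cw d0.
  apply: compl_open_limit Kopen _ cw; exists N => k kN.
  have tk : 0 < (t k)^-1 by rewrite invr_gt0 (tt.1 k).
  have Kk : K (t k *: wk k) by apply/CK; [rewrite -[t k *: _]subr0 HN | apply: Ck].
  by have := Kcone _ _ tk Kk; rewrite scalerA mulVf ?gt_eqF ?(tt.1 k) // scale1r.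
move=> Kh; split => //.
pose c := d / (enorm h + 1).
have h1 : 0 < enorm h + 1 by rewrite ltr_wpDl ?enorm_ge0.
have c0 : 0 < c by rewrite divr_gt0.
have tk k : 0 < c / k.+1%:R /\ c / k.+1%:R <= c * (k.+1%:R)^-1.
  by rewrite divr_gt0 ?ltr0Sn.
exists (fun k => c / k.+1%:R), (fun=> h); split; first exact: tdown0_harmonic tk.
split=> [eps e0|k]; first by exists 0%N => k _; rewrite subrr enorm0.
apply/CK; last exact: Kcone (tk k).1 Kh.
rewrite enormZ gtr0_norm ?(tk k).1 //.
have cE : c * (enorm h + 1) = d by rewrite divfK ?gt_eqF.
apply: (@le_lt_trans _ _ (c * enorm h)); last by rewrite -cE ltr_pM2l // ltrDl.
by rewrite ler_wpM2r ?enorm_ge0 // ler_pdivrMr ?ltr0Sn // ler_peMr ?(ltW c0) ?ler1n.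
Qed.

Lemma polyhedral_near_tangent C y0 : polyhedral_near C y0 -> C y0 ->
  exists2 d, 0 < d &
    (forall h, enorm h < d -> (C (y0 + h) <-> tangent_cone C y0 h)) /\
    (forall p, polyhedral_near (tangent_cone C y0) p).
Proof.
move=> /polyhedral_near_cones [k [Q [HQ [d d0 CQ]]]] Cy0.
pose K h := exists j, Q j h.
have Kcone : cone K by move=> x t t0 [j Qj]; exists j; apply: (HQ j).2.
have Kopen : compl_open K.
  by apply: compl_open_union => j; apply/convex_polyhedron_compl_open/(HQ j).1.
have TK := tangent_cone_near_cone Kcone Kopen Cy0 d0 CQ.
exists d => //; split=> [h hd|p]; first by rewrite TK; apply: CQ.
exists 1 => //; exists k, Q; split=> [j|h _]; [exact: (HQ j).1 | exact: TK].
Qed.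

End Polyhedra.

Section IteratedTangentCone.
Variables (R : realType) (n : nat).
Implicit Types (C K : vset R n) (x h : vec R n).

Lemma regular_normal_cone_near_cone C K y0 d x (t : R) eta :
  cone K -> 0 < t -> enorm (t *: x) < d ->
  (forall h, enorm h < d -> (C (y0 + h) <-> K h)) ->
  regular_normal_cone K x eta -> regular_normal_cone C (y0 + t *: x) eta.
Proof.
move=> Kcone t0 txd CK /(regular_normal_cone_dilate Kcone t0) rn.
have rho0 : 0 < d - enorm (t *: x) by rewrite subr_gt0.
apply: (regular_normal_cone_local rho0 _ _ rn); first by apply/CK => //; case: rn.
move=> h hr; rewrite -addrA; apply: (CK _ _).1.
by apply: le_lt_trans (ler_enormD _ _) _; lra.
Qed.

Lemma shrinking_scales (x : nat -> vec R n) (c : R) : 0 < c ->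
  exists t : nat -> R, [/\ tdown0 t, vcvg (fun k => t k *: x k) 0
    & forall k, enorm (t k *: x k) < c].
Proof.
move=> c0; pose t k := c / ((enorm (x k) + 1) * k.+1%:R).
have bounds k : [/\ 0 < t k, t k <= c / k.+1%:R & enorm (t k *: x k) < c / k.+1%:R].
  have e1 : 0 < enorm (x k) + 1 by rewrite ltr_wpDl ?enorm_ge0.
  have t0 : 0 < t k by rewrite divr_gt0 ?mulr_gt0 ?ltr0Sn.
  have tE : t k * (enorm (x k) + 1) = c / k.+1%:R.
    by rewrite /t invfM mulrA mulrAC divfK ?gt_eqF.
  split=> //; rewrite -tE; first by rewrite ler_peMr ?(ltW t0) // lerDr enorm_ge0.
  by rewrite enormZ gtr0_norm // ltr_pM2l // ltrDl.
exists t; split=> [||k].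
- by apply: (tdown0_harmonic (c := c)) => k; have [] := bounds k.
- by apply: (vcvg_le_harmonic (c := c)) => k; rewrite subr0; have [_ _ /ltW] := bounds k.
- have [_ _ /lt_le_trans] := bounds k; apply.
  by rewrite ler_pdivrMr ?ltr0Sn // ler_peMr ?(ltW c0) ?ler1n.
Qed.

(* Blow up twice: near [p] the set [T_D(yb)] looks like [p + T_{T_D(yb)}(p)], and
   near [yb] the set [D] looks like [yb + T_D(yb)]; scaling the base points down
   moves a regular normal from the iterated tangent cone back to [D]. *)
Lemma normal_cone_iterated_tangent_sub_dir (D : vset R n) (yb p w eta : vec R n) :
  polyhedral_near D yb -> D yb ->
  normal_cone (tangent_cone (tangent_cone D yb) p) w eta ->
  dir_normal_cone D yb p eta.
Proof.
move=> Dpoly Dyb [[Tp _] [wk [etak [cw [ce Nk]]]]].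
have [d1 d10 [DT Tpoly]] := polyhedral_near_tangent Dpoly Dyb.
have [d2 d20 [TT _]] := polyhedral_near_tangent (Tpoly p) Tp.
have [tau [tau0 tauw0 tauw]] := shrinking_scales wk d20.
pose pk k := p + tau k *: wk k.
have [sig [sig0 _ sigp]] := shrinking_scales pk d10.
exists sig, pk, etak; split=> //; split; last split=> // k.
  move=> eps e0; have [N HN] := tauw0 eps e0.
  by exists N => k kN; rewrite /pk addrAC subrr add0r -[tau k *: _]subr0 HN.
apply: regular_normal_cone_near_cone (@tangent_cone_cone _ _ D yb) (sig0.1 k) (sigp k) DT _.
exact: regular_normal_cone_near_cone (@tangent_cone_cone _ _ _ p) (tau0.1 k) (tauw k) TT (Nk k).2.
Qed.

End IteratedTangentCone.

Lemma dot_mulmx (R : realType) (m n : nat) (A : 'M[R]_(m, n)) (y : vec R m) (s : vec R n) :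
  dot y (A *m s) = dot (A^T *m y) s.
Proof.
have dotE k (a b : vec R k) : dot a b = (a^T *m b) 0 0.
  by rewrite /dot mxE; apply: eq_bigr => i _; rewrite mxE.
by rewrite !dotE mulmxA trmx_mul trmxK.
Qed.

Lemma dot_wsv (R : realType) (n m : nat) (Dg : vec R n -> 'M[R]_(m, n))
  (Hg : 'I_m -> vec R n -> 'M[R]_n) (xb s u : vec R n) (y v : vec R m) :
  dot y (wsv Dg Hg xb s u v) =
  dot ((Dg xb)^T *m y) s + 2^-1 * hess_lag_quad Hg xb y u - dot y v.
Proof.
rewrite /wsv dotBr dotDr dotZr dot_mulmx; congr (_ + _ * _ - _).
rewrite /hess_lag_quad /hess_lag (big_morph _ (@dotDr R n u) (@dot0r R n u)).
by rewrite {1}/dot; apply: eq_bigr => i _; rewrite dotZr /hess_quad mxE.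
Qed.

Lemma hess_lag_quad_ge0 (R : realType) (n m : nat) (g : vec R n -> vec R m)
  (Dg : vec R n -> 'M[R]_(m, n)) (Hg : 'I_m -> vec R n -> 'M[R]_n) (D : vset R m)
  (xb s u : vec R n) (y v : vec R m) :
  (Dg xb)^T *m y = 0 -> 0 <= dot y v ->
  normal_cone (Tcone D g Dg xb u) (wsv Dg Hg xb s u v) y ->
  0 <= hess_lag_quad Hg xb y u.
Proof.
move=> Dy yv /(normal_cone_orth (@tangent_cone_cone _ _ _ _)).
rewrite dot_wsv Dy dot0l add0r => /eqP; rewrite subr_eq0 => /eqP qv.
by rewrite -(pmulr_rge0 _ (_ : 0 < 2^-1)) ?qv // invr_gt0 ltr0Sn.
Qed.

Theorem proposition5p22 (R : realType) (n m : nat)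
  (g : vec R n -> vec R m) (Dg : vec R n -> 'M[R]_(m, n))
  (Hg : 'I_m -> vec R n -> 'M[R]_n) (D : vset R m) (xb u : vec R n) :
  C2_with g Dg Hg ->
  closed_set D ->
  locally_polyhedral D (g xb) ->
  D (g xb) ->                                  (* (xb, 0) \in gph Phi *)
  enorm u = 1 ->                               (* u \in S_X *)
  (* SOSCMS(u) *)
  (forall y : vec R m,
      (Dg xb)^T *m y = 0 ->
      0 <= hess_lag_quad Hg xb y u ->
      dir_normal_cone D (g xb) (Dg xb *m u) y ->
      y = 0) ->
  (* (a) *)
  (forall (s : vec R n) (y z : vec R m),
      (Dg xb)^T *m y = 0 ->
      hess_lag Hg xb y u + (Dg xb)^T *m z = 0 ->
      normal_cone (Tcone D g Dg xb u) (wsv Dg Hg xb s u 0) y ->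
      (normal_cone (Tcone D g Dg xb u) (wsv Dg Hg xb s u 0) z \/
       tangent_cone (normal_cone (Tcone D g Dg xb u) (wsv Dg Hg xb s u 0)) y z) ->
      y = 0)
  /\
  (* (b) *)
  (forall (xs s : vec R n) (y z : vec R m) (alpha : R),
      0 <= alpha ->
      let v := alpha *: y in
      xs = hess_lag Hg xb y u + (Dg xb)^T *m z ->
      normal_cone (Tcone D g Dg xb u) (wsv Dg Hg xb s u v) y ->
      (Dg xb)^T *m y = 0 ->
      (normal_cone (Tcone D g Dg xb u) (wsv Dg Hg xb s u v) z \/
       tangent_cone (normal_cone (Tcone D g Dg xb u) (wsv Dg Hg xb s u v)) y z) ->
      exists lam : vec R m, normal_cone D (g xb) lam /\ xs = (Dg xb)^T *m lam).
Proof.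
move=> _ _ /locally_polyhedral_near Dpoly Dxb _ SOSCMS.
have Ndir w y : normal_cone (Tcone D g Dg xb u) w y ->
    dir_normal_cone D (g xb) (Dg xb *m u) y.
  exact: normal_cone_iterated_tangent_sub_dir Dpoly Dxb.
have normal_kernel_eq0 s v y : (Dg xb)^T *m y = 0 -> 0 <= dot y v ->
    normal_cone (Tcone D g Dg xb u) (wsv Dg Hg xb s u v) y -> y = 0.
  by move=> Dy yv Ny; apply: SOSCMS (Ndir _ _ Ny) => //; apply: hess_lag_quad_ge0 Ny.
split=> [s y z Dy _ Ny _|xs s y z al al0 v -> Ny Dy Nz].
  by apply: (normal_kernel_eq0 s 0) Ny; rewrite ?dot0r.
have y0 : y = 0 by apply: normal_kernel_eq0 Dy _ Ny; rewrite dotZr mulr_ge0 ?dot_ge0.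
subst y; exists z; split; last first.
  by rewrite /hess_lag big1 ?add0r // => i _; rewrite mxE scale0r.
have ND w z' : normal_cone (Tcone D g Dg xb u) w z' -> normal_cone D (g xb) z'.
  by move=> /Ndir; apply: dir_normal_cone_sub.
case: Nz => [/ND //|/(tangent_cone_sub (ND _))].
exact: tangent_cone0_sub (@normal_cone_cone _ _ _ _) (@normal_cone_closed _ _ _ _) z.
Qed.
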